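(* Let $\Omega_M=\mathbb R^p$, $\mathcal H=\mathbb R$, and let $M$ be a random vector in $\mathbb R^p$ with invertible covariance matrix $\mathrm{var}(M)$. Let $V_I$ be a real random variable, and let $\kappa_M(m_1,m_2)=c+m_1^\top m_2$ for a constant $c$. Assume the moments and range conditions below hold, so that the weak conditional mean is defined. Then $$\mathbb E[V_I\,\|\,M=m]=\beta_0+\beta^\top(m-\mathbb EM),$$ where $\beta_0=\mathbb EV_I$ and $\beta^\top=\mathrm{cov}(V_I,M)\,[\mathrm{var}(M)]^{-1}$, with $\mathrm{cov}(V_I,M)\in\mathbb R^{1\times p}$.
   Context: Let $\mathcal M$ be the RKHS of $\kappa_M$, $\tau_M(m)=\kappa_M(\cdot,m)$, and $\mu_M=\mathbb E\tau_M(M)$. Define $\Sigma_{MM}=\mathbb E[(\tau_M(M)-\mu_M)\otimes(\tau_M(M)-\mu_M)]$ and $\Sigma_{MV}=\mathbb E[(\tau_M(M)-\mu_M)\otimes(V_I-\mathbb EV_I)]$, with $\Sigma_{VM}$ the adjoint of $\Sigma_{MV}$ and $(a\otimes b)h=\langle b,h\rangle a$. $\Sigma_{MM}^\dagger$ is the Moore–Penrose inverse. Assume $\mathbb E\kappa_M(M,M)<\infty$, $\mathbb E[\kappa_M(M,M)^{1/2}|V_I|]<\infty$, $\mathrm{ran}\Sigma_{MV}\subset\mathrm{ran}\Sigma_{MM}$, and that $\Sigma_{MM}^\dagger\Sigma_{MV}$ is bounded. The weak conditional mean of $V_I$ given $M$ is $\mathbb E[V_I\,\|\,M=m]=\mathbb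 EV_I+\lambda(m)-\mathbb E\lambda(M)$, where $\lambda(m)$ is the Riesz representer of $v\mapsto(\Sigma_{MM}^\dagger\Sigma_{MV}v)(m)$. Equivalently, $$\mathbb E[V_I\,\|\,M=m]=\mathbb EV_I+\Sigma_{VM}\Sigma_{MM}^\dagger(\tau_M(m)-\mu_M).$$ *)

From HB Require Import structures.
From mathcomp Require Import all_boot all_order all_algebra.
From mathcomp Require Import all_classical all_reals all_analysis.

Set Implicit Arguments.
Unset Strict Implicit.
Unset Printing Implicit Defensive.

Import Order.TTheory GRing.Theory Num.Theory.
Import numFieldNormedType.Exports.

Local Open Scope classical_set_scope.
Local Open Scope ring_scope.

Section WeakCondMean.
Context {d : measure_display} {T : measurableType d} {R : realType}.
Variable P : probability T R.

Definition Ex (f : T -> R) : R := \int[P]_(x in setT) f x.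

Definition Evec n (X : T -> 'cV[R]_n) : 'cV[R]_n :=
  \col_i Ex (fun t => X t i 0).

Definition cov (X Y : T -> R) : R :=
  Ex (fun t => (X t - Ex X) * (Y t - Ex Y)).

Definition varmx p (M : T -> 'cV[R]_p) : 'M[R]_p :=
  \matrix_(i, j) cov (fun t => M t i 0) (fun t => M t j 0).

Definition covrow p (V : T -> R) (M : T -> 'cV[R]_p) : 'rV[R]_p :=
  \row_j cov V (fun t => M t j 0).

End WeakCondMean.

(* Moore--Penrose inverse of a real matrix, via the four Penrose conditions
   (w.r.t. the standard Euclidean inner products, so adjoint = transpose). *)
Definition penrose {R : realType} m n (A : 'M[R]_(m, n)) (B : 'M[R]_(n, m)) :=
  [/\ A *m B *m A = A, B *m A *m B = B,
      (A *m B)^T = A *m B & (B *m A)^T = B *m A].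

Definition mp_inv {R : realType} m n (A : 'M[R]_(m, n)) : 'M[R]_(n, m) :=
  xget 0 [set B | penrose A B].

(* An (isometric) coordinate model of the RKHS of a kernel kappa on a set X:
   Phi : X -> R^n with kappa x y = <Phi x, Phi y>, and the Phi x spanning R^n
   (equivalently w |-> (x |-> <w, Phi x>) is injective).  Then
   w |-> (x |-> <w, Phi x>) is an isometric isomorphism from R^n (Euclidean)
   onto the RKHS of kappa, sending Phi x to tau(x) = kappa(., x). *)
Definition rkhs_coords {R : realType} (X : Type) n
    (kappa : X -> X -> R) (Phi : X -> 'cV[R]_n) : Prop :=
  (forall x y, ((Phi x)^T *m Phi y) 0 0 = kappa x y) /\
  (forall w : 'cV[R]_n, (forall x, (w^T *m Phi x) 0 0 = 0) -> w = 0).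

Section WCM.
Context {d : measure_display} {T : measurableType d} {R : realType}.
Variable P : probability T R.
Variables (X : Type) (n : nat) (Phi : X -> 'cV[R]_n).
Variables (M : T -> X) (V : T -> R).

Definition mu_M : 'cV[R]_n := Evec P (fun t => Phi (M t)).

Definition Sigma_MM : 'M[R]_n :=
  \matrix_(i, j) Ex P (fun t => (Phi (M t) - mu_M) i 0 * (Phi (M t) - mu_M) j 0).

Definition Sigma_MV : 'M[R]_(n, 1) :=
  \col_i Ex P (fun t => (Phi (M t) - mu_M) i 0 * (V t - Ex P V)).

(* lambda(m): Riesz representer in H = R of
   v |-> (Sigma_MM^dagger Sigma_MV v)(m) = v * <Sigma_MM^dagger Sigma_MV 1, tau(m)>,
   i.e. the number (Sigma_MM^dagger Sigma_MV 1)(m). *)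
Definition lambda_wcm (m : X) : R :=
  ((mp_inv Sigma_MM *m Sigma_MV)^T *m Phi m) 0 0.

Definition weak_cond_mean (m : X) : R :=
  Ex P V + lambda_wcm m - Ex P (fun t => lambda_wcm (M t)).

End WCM.

(* The Gram identity <Phi x, Phi y> = c + x^T y says that the centred features
   Phi x - Phi 0 have Gram matrix x^T y, which forces Phi to be affine:
   Phi x = Phi 0 + L x with L^T L = 1.  Hence mu_M = Phi 0 + L E[M],
   Sigma_MM = L var(M) L^T and Sigma_MV = L cov(V, M)^T.  Conjugating the
   Penrose identity A B A = A for A = L var(M) L^T by L gives
   L^T B L = var(M)^-1, so lambda is affine with slope cov(V, M) var(M)^-1,
   and subtracting E lambda(M) leaves this slope applied to m - E[M]. *)

From HB Require Import structures.
From mathcomp Require Import all_boot all_order all_algebra.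
From mathcomp Require Import all_classical all_reals all_analysis.
From mathcomp Require Import ring lra measurable_realfun.

Import Order.TTheory GRing.Theory Num.Theory.
Import numFieldNormedType.Exports.
Local Open Scope classical_set_scope.
Local Open Scope ring_scope.

Section ColumnGram.
Context {R : realType} {n : nat}.
Implicit Types v : 'cV[R]_n.

Lemma cV_gram_sum v : (v^T *m v) 0 0 = \sum_i v i 0 ^+ 2.
Proof. by rewrite mxE; apply: eq_bigr => i _; rewrite mxE expr2. Qed.

Lemma cV_gram_ge0 v : 0 <= (v^T *m v) 0 0.
Proof. by rewrite cV_gram_sum; apply: sumr_ge0 => i _; exact: sqr_ge0. Qed.

Lemma cV_sqr_le_gram v k : v k 0 ^+ 2 <= (v^T *m v) 0 0.
Proof.
rewrite cV_gram_sum (bigD1 k) //= lerDl.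
by apply: sumr_ge0 => i _; exact: sqr_ge0.
Qed.

Lemma cV_gram_eq0 v : (v^T *m v) 0 0 = 0 -> v = 0.
Proof.
rewrite cV_gram_sum => /eqP; rewrite psumr_eq0 => [/allP v0|i _]; last first.
  exact: sqr_ge0.
apply/matrixP => i j; rewrite (ord1 j) mxE; apply/eqP.
by rewrite -sqrf_eq0; exact: v0 (mem_index_enum _).
Qed.

End ColumnGram.

Definition feature_lin {R : realType} {p n} (Phi : 'cV[R]_p -> 'cV[R]_n) :
  'M[R]_(n, p) := \matrix_(i, j) (Phi (delta_mx j 0) - Phi 0) i 0.

Section LinearKernelFeatureMap.
Context {R : realType} {p n : nat} {c : R} {Phi : 'cV[R]_p -> 'cV[R]_n}.
Hypothesis Phi_gram : forall x y, ((Phi x)^T *m Phi y) 0 0 = c + (x^T *m y) 0 0.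

Lemma kernel_const_ge0 : 0 <= c.
Proof.
by have := cV_gram_ge0 (Phi 0); rewrite Phi_gram trmx0 mul0mx mxE addr0.
Qed.

Lemma centered_feature_gram x y :
  (Phi x - Phi 0)^T *m (Phi y - Phi 0) = x^T *m y.
Proof.
rewrite [LHS]mx11_scalar [RHS]mx11_scalar; congr (_%:M).
have entryB (A B : 'M[R]_1) : (A - B) 0 0 = A 0 0 - B 0 0 by rewrite !mxE.
rewrite !linearB /= !mulmxBl !entryB !Phi_gram.
by rewrite !trmx0 !mul0mx !mulmx0 !mxE; ring.
Qed.

Lemma trmx_feature_lin_centered x :
  (feature_lin Phi)^T *m (Phi x - Phi 0) = x.
Proof.
apply/matrixP => j k; rewrite (ord1 k).
transitivity (((Phi (delta_mx j 0) - Phi 0)^T *m (Phi x - Phi 0)) 0 0).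
  by rewrite !mxE; apply: eq_bigr => i _; rewrite !mxE.
by rewrite centered_feature_gram trmx_delta -rowE mxE.
Qed.

Lemma feature_lin_col j :
  feature_lin Phi *m delta_mx j 0 = Phi (delta_mx j 0) - Phi 0.
Proof. by apply/matrixP => i k; rewrite (ord1 k) -colE !mxE. Qed.

Lemma feature_lin_isometry : (feature_lin Phi)^T *m feature_lin Phi = 1%:M.
Proof.
apply/matrixP => j k.
have := congr1 (fun v : 'cV[R]_p => v j 0)
  (trmx_feature_lin_centered (delta_mx k 0)).
by rewrite -feature_lin_col mulmxA -colE -[delta_mx k 0]col1 !mxE.
Qed.

Lemma feature_affine x : Phi x = Phi 0 + feature_lin Phi *m x.
Proof.
set L := feature_lin Phi; set G := Phi x - Phi 0.
have LxG : (L *m x)^T *m G = x^T *m x.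
  by rewrite trmx_mul -mulmxA trmx_feature_lin_centered.
have GLx : G^T *m (L *m x) = x^T *m x.
  by rewrite -[LHS]trmxK trmx_mul trmxK LxG trmx_mul trmxK.
have LxLx : (L *m x)^T *m (L *m x) = x^T *m x.
  by rewrite trmx_mul -mulmxA (mulmxA L^T) feature_lin_isometry mul1mx.
have : G - L *m x = 0.
  have GG : G^T *m G = x^T *m x := centered_feature_gram x x.
  apply: cV_gram_eq0; clearbody G; rewrite !linearB /= !mulmxBl GG LxG GLx LxLx.
  by rewrite !subrr mxE.
by move/eqP; rewrite subr_eq0 /G subr_eq addrC => /eqP.
Qed.

End LinearKernelFeatureMap.

Lemma penrose_mp_inv {R : realType} {m n} (A : 'M[R]_(m, n)) :
  (exists B, penrose A B) -> penrose A (mp_inv A).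
Proof. exact: xgetPex. Qed.

Section IsometricConjugation.
Context {R : realType} {n p : nat} {L : 'M[R]_(n, p)}.
Hypothesis L_isometry : L^T *m L = 1%:M.

Lemma mul_isometric_conj (K K' : 'M[R]_p) :
  L *m K *m L^T *m (L *m K' *m L^T) = L *m (K *m K') *m L^T.
Proof. by rewrite !mulmxA -(mulmxA _ L^T) L_isometry mulmx1 -!mulmxA. Qed.

Lemma isometric_conjK (K : 'M[R]_p) : L^T *m (L *m K *m L^T) *m L = K.
Proof. by rewrite !mulmxA L_isometry mul1mx -mulmxA L_isometry mulmx1. Qed.

Context {S : 'M[R]_p}.
Hypothesis S_unit : S \in unitmx.

Lemma penrose_isometric_conj : penrose (L *m S *m L^T) (L *m invmx S *m L^T).
Proof.
rewrite /penrose !mul_isometric_conj mulmxV // mulVmx // !mul1mx mulmx1.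
by rewrite trmx_mul trmxK.
Qed.

Lemma mp_inv_isometric_conj : L^T *m mp_inv (L *m S *m L^T) *m L = invmx S.
Proof.
have [ABA _ _ _] := penrose_mp_inv _ (ex_intro _ _ penrose_isometric_conj).
set B := mp_inv _ in ABA *; set X := L^T *m B *m L.
have SXS : S *m X *m S = S.
  have := congr1 (fun A => L^T *m A *m L) ABA.
  rewrite /= isometric_conjK !mulmxA L_isometry mul1mx.
  rewrite -!mulmxA L_isometry mulmx1.
  by rewrite !mulmxA.
have -> : X = invmx S *m (S *m X *m S) *m invmx S.
  by rewrite !mulmxA mulmxK // mulVmx // mul1mx.
by rewrite SXS mulVmx // mul1mx.
Qed.

Lemma mp_inv_isometric_conj_coef (u : 'rV[R]_p) : S^T = S ->
  (mp_inv (L *m S *m L^T) *m (L *m u^T))^T *m L = u *m invmx S.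
Proof.
move=> S_sym; rewrite -[LHS]trmxK trmx_mul trmxK !mulmxA mp_inv_isometric_conj.
by rewrite trmx_mul trmxK trmx_inv S_sym.
Qed.

End IsometricConjugation.

Section RealExpectation.
Context {d : measure_display} {T : measurableType d} {R : realType}.
Context {P : probability T R}.
Local Notation rv_integrable f := (P.-integrable setT (EFin \o f)).
Implicit Types (f g : T -> R) (a : R).

Lemma rv_integrable_cst a : rv_integrable (fun=> a).
Proof. exact: finite_measure_integrable_cst. Qed.

Lemma rv_integrableD f g : rv_integrable f -> rv_integrable g ->
  rv_integrable (fun t => f t + g t).
Proof. exact: integrableD. Qed.

Lemma rv_integrableZ a f : rv_integrable f -> rv_integrable (fun t => a * f t).
Proof. exact: integrableZl. Qed.

Lemma rv_integrableB f g : rv_integrable f -> rv_integrable g ->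
  rv_integrable (fun t => f t - g t).
Proof. exact: integrableB. Qed.

Lemma rv_integrable_sum (I : Type) (s : seq I) (F : I -> T -> R) :
  (forall i, rv_integrable (F i)) ->
  rv_integrable (fun t => \sum_(i <- s) F i t).
Proof.
move=> Fi.
have := @integrable_sum _ _ _ P _ measurableT _ s xpredT _ (fun i _ => Fi i).
by apply: eq_integrable => // t _; rewrite /= sumEFin.
Qed.

Lemma rv_integrable_le f g : measurable_fun setT f -> rv_integrable g ->
  (forall t, `|f t| <= g t) -> rv_integrable f.
Proof.
move=> mf gi fg; apply: le_integrable gi => //; first exact/measurable_EFinP.
by move=> t _ /=; rewrite lee_fin (le_trans (fg t)) // ler_norm.
Qed.

Lemma Ex_cst a : Ex P (fun=> a) = a.
Proof.
have P1 : fine (P setT) = 1 by rewrite probability_setT.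
by rewrite /Ex Rintegral_cst // P1 mulr1.
Qed.

Lemma ExD f g : rv_integrable f -> rv_integrable g ->
  Ex P (fun t => f t + g t) = Ex P f + Ex P g.
Proof. exact: RintegralD. Qed.

Lemma ExZ a f : rv_integrable f -> Ex P (fun t => a * f t) = a * Ex P f.
Proof. exact: RintegralZl. Qed.

Lemma Ex_sum (I : Type) (s : seq I) (F : I -> T -> R) :
  (forall i, rv_integrable (F i)) ->
  Ex P (fun t => \sum_(i <- s) F i t) = \sum_(i <- s) Ex P (F i).
Proof.
move=> Fi; elim: s => [|i s IHs].
  by under eq_fun do rewrite big_nil; rewrite Ex_cst big_nil.
under eq_fun do rewrite big_cons.
by rewrite ExD ?IHs ?big_cons //; exact: rv_integrable_sum.
Qed.

Lemma rv_integrable_centered_mul f g :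
  rv_integrable f -> rv_integrable g -> rv_integrable (fun t => f t * g t) ->
  rv_integrable (fun t => (f t - Ex P f) * (g t - Ex P g)).
Proof.
move=> fi gi fgi.
have -> : (fun t => (f t - Ex P f) * (g t - Ex P g)) = fun t =>
    f t * g t - Ex P g * f t - (Ex P f * g t - Ex P f * Ex P g).
  by apply/funext => t; ring.
apply: rv_integrableB; last exact: rv_integrableB (rv_integrableZ _ _ gi)
  (rv_integrable_cst _).
exact: rv_integrableB fgi (rv_integrableZ _ _ fi).
Qed.

Lemma rv_integrable_lincomb (I : finType) (u : I -> R) (F : I -> T -> R) :
  (forall i, rv_integrable (F i)) ->
  rv_integrable (fun t => \sum_i u i * F i t).
Proof. by move=> Fi; apply: rv_integrable_sum => i; exact: rv_integrableZ. Qed.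

Lemma Ex_lincomb (I : finType) (u : I -> R) (F : I -> T -> R) :
  (forall i, rv_integrable (F i)) ->
  Ex P (fun t => \sum_i u i * F i t) = \sum_i u i * Ex P (F i).
Proof.
move=> Fi; rewrite Ex_sum => [|i]; last exact: rv_integrableZ.
by apply: eq_bigr => i _; rewrite ExZ.
Qed.

Lemma Ex_affine p (b : R) (u : 'rV[R]_p) (X : T -> 'cV[R]_p) :
  (forall k, rv_integrable (fun t => X t k 0)) ->
  Ex P (fun t => b + (u *m X t) 0 0) = b + (u *m Evec P X) 0 0.
Proof.
move=> Xi; under eq_fun do rewrite mxE.
rewrite ExD ?Ex_cst ?Ex_lincomb ?mxE //; last first.
- exact: rv_integrable_lincomb.
- exact: rv_integrable_cst.
by congr (_ + _); apply: eq_bigr => k _; rewrite mxE.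
Qed.

Lemma varmx_sym p (M : T -> 'cV[R]_p) : (varmx P M)^T = varmx P M.
Proof.
apply/matrixP => i j; rewrite !mxE /cov; congr (Ex P _).
by apply/funext => t; rewrite mulrC.
Qed.

Section SquareIntegrableVector.
Context {p : nat} {c : R} {M : T -> 'cV[R]_p}.
Hypotheses (M_meas : forall k, measurable_fun setT (fun t => M t k 0))
  (M_sqr : rv_integrable (fun t => c + ((M t)^T *m M t) 0 0)).

Lemma rv_integrable_coord k : rv_integrable (fun t => M t k 0).
Proof.
have M_sqr1 := rv_integrableD _ _ (rv_integrable_cst (1 - c)) M_sqr.
apply: (rv_integrable_le _ _ (M_meas k) M_sqr1) => t.
have := cV_sqr_le_gram (M t) k.
move: (M t k 0) ((M t)^T *m M t) => x G xG.
have := sqr_ge0 (`|x| - 1); rewrite -(real_normK (num_real x)) in xG.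
have := normr_ge0 x; nra.
Qed.

Lemma rv_integrable_coord_mul k l :
  rv_integrable (fun t => M t k 0 * M t l 0).
Proof.
apply: (rv_integrable_le _ _ (measurable_funM (M_meas k) (M_meas l))
  (rv_integrableB _ _ (rv_integrableZ 2 _ M_sqr) (rv_integrable_cst (2 * c)))).
move=> t; have := cV_sqr_le_gram (M t) k; have := cV_sqr_le_gram (M t) l.
rewrite normrM; move: (M t k 0) (M t l 0) ((M t)^T *m M t) => x y G.
rewrite -(real_normK (num_real x)) -(real_normK (num_real y)) => yG xG.
have := sqr_ge0 (`|x| - `|y|); have := normr_ge0 x; have := normr_ge0 y; nra.
Qed.

Lemma rv_integrable_coord_mulr {V : T -> R} :
  0 <= c -> measurable_fun setT V ->
  rv_integrable (fun t => Num.sqrt (c + ((M t)^T *m M t) 0 0) * `|V t|) ->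
  forall k, rv_integrable (fun t => M t k 0 * V t).
Proof.
move=> c_ge0 V_meas MVi k.
apply: (rv_integrable_le _ _ (measurable_funM (M_meas k) V_meas) MVi) => t.
rewrite normrM ler_wpM2r // -sqrtr_sqr ler_sqrt; last first.
  by rewrite addr_ge0 // cV_gram_ge0.
by have := cV_sqr_le_gram (M t) k; lra.
Qed.

End SquareIntegrableVector.

Section AffineFeatureMoments.
Context {p n : nat} {a : 'cV[R]_n} {L : 'M[R]_(n, p)}.
Context {Phi : 'cV[R]_p -> 'cV[R]_n} {M : T -> 'cV[R]_p} {V : T -> R}.
Hypothesis Phi_affine : forall x, Phi x = a + L *m x.
Hypotheses (M_int : forall k, rv_integrable (fun t => M t k 0))
  (MM_int : forall k l, rv_integrable (fun t => M t k 0 * M t l 0))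
  (MV_int : forall k, rv_integrable (fun t => M t k 0 * V t))
  (V_int : rv_integrable V).

Let mulmx_row m (A : 'M[R]_(m, p)) i (x : 'cV[R]_p) :
  (A *m x) i 0 = (row i A *m x) 0 0.
Proof. by rewrite -row_mul [RHS]mxE. Qed.

Lemma mu_M_affine : mu_M P Phi M = a + L *m Evec P M.
Proof.
apply/matrixP => i j.
rewrite (ord1 j) [LHS]mxE [RHS]mxE mulmx_row -Ex_affine //.
by congr (Ex P _); apply/funext => t; rewrite Phi_affine [LHS]mxE -mulmx_row.
Qed.

Lemma centered_feature_affine t :
  Phi (M t) - mu_M P Phi M = L *m (M t - Evec P M).
Proof.
by rewrite Phi_affine mu_M_affine opprD addrACA subrr add0r mulmxBr.
Qed.

Let Mc k t := M t k 0 - Ex P (fun s => M s k 0).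

Let Mc_entry t k : (M t - Evec P M) k 0 = Mc k t.
Proof. by rewrite !mxE. Qed.

Lemma Sigma_MM_affine : Sigma_MM P Phi M = L *m varmx P M *m L^T.
Proof.
have McMc_int k l : rv_integrable (fun t => Mc k t * Mc l t).
  exact: rv_integrable_centered_mul.
apply/matrixP => i j; rewrite !mxE.
transitivity (Ex P (fun t => \sum_k L i k * \sum_l L j l * (Mc k t * Mc l t))).
  congr (Ex P _); apply/funext => t; rewrite centered_feature_affine !mxE.
  rewrite big_distrl; apply: eq_bigr => k _ /=; rewrite big_distrr.
  rewrite big_distrr; apply: eq_bigr => l _ /=; rewrite !Mc_entry; ring.
rewrite Ex_lincomb => [|k]; last exact: rv_integrable_lincomb.
under eq_bigr do rewrite Ex_lincomb //.
under [RHS]eq_bigr do rewrite !mxE big_distrl.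
rewrite exchange_big; apply: eq_bigr => k _ /=; rewrite big_distrr.
by apply: eq_bigr => l _ /=; rewrite mxE mulrA mulrAC.
Qed.

Lemma Sigma_MV_affine : Sigma_MV P Phi M V = L *m (covrow P V M)^T.
Proof.
have McV_int k : rv_integrable (fun t => Mc k t * (V t - Ex P V)).
  exact: rv_integrable_centered_mul.
apply/matrixP => i j; rewrite (ord1 j) !mxE.
transitivity (Ex P (fun t => \sum_k L i k * (Mc k t * (V t - Ex P V)))).
  congr (Ex P _); apply/funext => t; rewrite centered_feature_affine !mxE.
  by rewrite big_distrl; apply: eq_bigr => k _ /=; rewrite Mc_entry mulrA.
rewrite Ex_lincomb //; apply: eq_bigr => k _.
by rewrite !mxE /cov; congr (_ * Ex P _); apply/funext => t; rewrite mulrC.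
Qed.

Lemma weak_cond_mean_affine x :
  weak_cond_mean P Phi M V x = Ex P V +
    ((mp_inv (Sigma_MM P Phi M) *m Sigma_MV P Phi M V)^T *m L
       *m (x - Evec P M)) 0 0.
Proof.
set w := mp_inv _ *m _.
have lambda_affine y :
    lambda_wcm P Phi M V y = (w^T *m a) 0 0 + (w^T *m L *m y) 0 0.
  by rewrite /lambda_wcm -/w Phi_affine mulmxDr mxE mulmxA.
rewrite /weak_cond_mean; under eq_fun do rewrite lambda_affine.
rewrite lambda_affine -mulmxA Ex_affine // mulmxA mulmxBr [in RHS]mxE.
by rewrite [(- (_ : 'M[R]_1)) 0 0]mxE; ring.
Qed.

End AffineFeatureMoments.

End RealExpectation.

Theorem proposition2 (d : measure_display) (T : measurableType d) (R : realType)
  (P : probability T R) (p : nat) (M : T -> 'cV[R]_p) (V : T -> R) (c : R)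
  (n : nat) (Phi : 'cV[R]_p -> 'cV[R]_n) :
  let kappa := fun m1 m2 : 'cV[R]_p => c + (m1^T *m m2) 0 0 in
  (* Phi is a coordinate model of the RKHS of kappa_M(m1,m2) = c + m1^T m2 *)
  rkhs_coords kappa Phi ->
  (* M is a random vector, V a real random variable *)
  (forall i, measurable_fun setT (fun t => M t i 0)) ->
  measurable_fun setT V ->
  P.-integrable setT (EFin \o V) ->
  (* E kappa_M(M, M) < oo *)
  P.-integrable setT (fun t => (kappa (M t) (M t))%:E) ->
  (* E [kappa_M(M, M)^(1/2) |V|] < oo *)
  P.-integrable setT (fun t => (Num.sqrt (kappa (M t) (M t)) * `|V t|)%:E) ->
  (* ran Sigma_MV is contained in ran Sigma_MM *)
  (exists W : 'M[R]_(n, 1), Sigma_MV P Phi M V = Sigma_MM P Phi M *m W) ->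
  (* var(M) invertible *)
  varmx P M \in unitmx ->
  forall m : 'cV[R]_p,
    weak_cond_mean P Phi M V m =
    Ex P V + ((covrow P V M *m invmx (varmx P M)) *m (m - Evec P M)) 0 0.
Proof.
move=> kappa [Phi_gram _] M_meas V_meas V_int K_int KV_int _ var_unit m.
have M_int := rv_integrable_coord M_meas K_int.
have MM_int := rv_integrable_coord_mul M_meas K_int.
have MV_int := rv_integrable_coord_mulr M_meas (kernel_const_ge0 Phi_gram)
  V_meas KV_int.
have Phi_affine := feature_affine Phi_gram.
rewrite (weak_cond_mean_affine Phi_affine M_int).
rewrite (Sigma_MM_affine Phi_affine M_int MM_int).
rewrite (Sigma_MV_affine Phi_affine M_int MV_int V_int).
rewrite mp_inv_isometric_conj_coef //; last exact: varmx_sym.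
exact: feature_lin_isometry Phi_gram.
Qed.
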